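(* Let $(A,G)$ be an admissible pair with $A\in M_{Q_0}(\mathbb Z)$ skew-symmetrizable. Then the quotient matrix $A/G$ is skew-symmetrizable.
   Context: $Q_0$ is a finite set. A matrix $B\in M_{Q_0}(\mathbb Z)$ is skew-symmetrizable if there is a diagonal integer matrix $D$ with non-negative (positive) diagonal entries such that $DB$ is skew-symmetric. An automorphism of $A=(a_{ij})$ is a permutation $g$ of $Q_0$ with $a_{gi,gj}=a_{ij}$ for all $i,j$; a group $G$ of such permutations is an automorphism group of $A$; it is admissible (and $(A,G)$ an admissible pair) if for distinct $i,j$ in the same $G$-orbit there is no path of length $1$ or $2$ from $i$ to $j$ in the valued quiver of $A$ (i.e. $a_{ij}\le0$ and no $k$ with $a_{ik}>0$, $a_{kj}>0$). With $\overline Q_0$ the set of $G$-orbits, the quotient matrix $A/G\in M_{\overline Q_0}(\mathbb Z)$ has entries $(A/G)_{\mathbf i,\mathbf j}=\sum_{k\in\mathbf i}a_{k,j}$ for any $j\in\mathbf j$. *)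

From HB Require Import structures.
From mathcomp Require Import all_boot all_order all_algebra all_fingroup.
Set Implicit Arguments. Unset Strict Implicit. Unset Printing Implicit Defensive.
Import Order.TTheory GRing.Theory Num.Theory.
Local Open Scope ring_scope.

Definition qmatrix (Q0 : finType) := Q0 -> Q0 -> int.

Definition skew_symmetrizable (Q0 : finType) (B : qmatrix Q0) : Prop :=
  exists d : Q0 -> int, (forall i, 0 < d i) /\
    (forall i j, d i * B i j = - (d j * B j i)).

Definition is_aut_group (Q0 : finType) (A : qmatrix Q0) (G : {group {perm Q0}}) :=
  forall g, g \in G -> forall i j, A (g i) (g j) = A i j.

Definition orbits (Q0 : finType) (G : {group {perm Q0}}) : {set {set Q0}} :=
  [set orbit 'P G x | x : Q0].

(* admissible: no path of length 1 or 2 between distinct vertices of an orbit *)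
Definition admissible (Q0 : finType) (A : qmatrix Q0) (G : {group {perm Q0}}) :=
  is_aut_group A G /\
  forall i j, j \in orbit 'P G i -> i != j ->
    A i j <= 0 /\ forall k, ~~ ((0 < A i k) && (0 < A k j)).

Definition orbit_type (Q0 : finType) (G : {group {perm Q0}}) :=
  {O : {set Q0} | O \in orbits G}.

Definition quotient_matrix (Q0 : finType) (A : qmatrix Q0) (G : {group {perm Q0}})
  : qmatrix (orbit_type G) :=
  fun I J => if [pick j in val J] is Some j then \sum_(k in val I) A k j else 0.
Arguments quotient_matrix {Q0} A G _ _.
Arguments orbit_type {Q0} G.

From mathcomp Require Import all_boot all_order all_algebra all_fingroup.
From mathcomp Require Import ring.
Set Implicit Arguments. Unset Strict Implicit. Unset Printing Implicit Defensive.
Import Order.TTheory GRing.Theory Num.Theory.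
Local Open Scope ring_scope.

(* Summing the symmetrizer d over G gives a G-invariant symmetrizer e.  For
   orbits I, J the column sums S(I, j) = \sum_(k in I) a_kj do not depend on
   j in J, so summing e_k a_kj over I x J yields
   |J| e_I S(I, J) = - |I| e_J S(J, I).  Orbit-stabilizer, |G| = |I| |G_i|,
   turns 1/|I| into |G_i|/|G|, so d'_I := |G_i| e_i symmetrizes A/G. *)

Section AveragedSymmetrizer.

Variables (Q0 : finType) (A : qmatrix Q0) (G : {group {perm Q0}}).
Hypothesis autA : is_aut_group A G.

Definition orbit_colsum (x j : Q0) : int := \sum_(k in orbit 'P G x) A k j.

Lemma orbit_colsum_act x j g : g \in G -> orbit_colsum x (g j) = orbit_colsum x j.
Proof.
move=> gG; rewrite /orbit_colsum (reindex_acts 'P (acts_orbit 'P x (subsetT G)) gG).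
by apply: eq_bigr => k _; rewrite /= autA.
Qed.

Lemma orbit_colsum_orbit x j j' :
  j' \in orbit 'P G j -> orbit_colsum x j' = orbit_colsum x j.
Proof. by case/orbitP => g gG <-; apply: orbit_colsum_act. Qed.

Lemma sum_orbit_colsum x y :
  \sum_(j in orbit 'P G y) orbit_colsum x j = #|orbit 'P G y|%:R * orbit_colsum x y.
Proof.
rewrite mulr_natl -sumr_const; apply: eq_bigr => j jy.
exact: orbit_colsum_orbit.
Qed.

Variable d : Q0 -> int.
Hypothesis d_gt0 : forall i, 0 < d i.
Hypothesis dA : forall i j, d i * A i j = - (d j * A j i).

Definition avg_weight (i : Q0) : int := \sum_(h in G) d (h i).

Lemma avg_weight_gt0 i : 0 < avg_weight i.
Proof.
rewrite /avg_weight (bigD1 1%g) ?group1 //= perm1 ltr_wpDr //.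
by apply: sumr_ge0 => h _; apply: ltW.
Qed.

Lemma avg_weight_skew i j : avg_weight i * A i j = - (avg_weight j * A j i).
Proof.
rewrite /avg_weight !mulr_suml -sumrN; apply: eq_bigr => h hG.
by rewrite -(autA hG i j) -(autA hG j i) dA.
Qed.

Lemma avg_weight_act g i : g \in G -> avg_weight (g i) = avg_weight i.
Proof.
move=> gG; rewrite /avg_weight [RHS](reindex_inj (mulgI g)) /=.
by apply: eq_big => [h|h _]; [rewrite groupMl | rewrite permM].
Qed.

Lemma avg_weight_orbit i k : k \in orbit 'P G i -> avg_weight k = avg_weight i.
Proof. by case/orbitP => g gG <-; apply: avg_weight_act. Qed.

Lemma orbit_colsum_skew x y :
  avg_weight x * (#|orbit 'P G y|%:R * orbit_colsum x y) =
  - (avg_weight y * (#|orbit 'P G x|%:R * orbit_colsum y x)).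
Proof.
rewrite -!sum_orbit_colsum /orbit_colsum !mulr_sumr -sumrN.
under eq_bigr do rewrite mulr_sumr.
rewrite exchange_big /=; apply: eq_bigr => k kx.
rewrite mulr_sumr -sumrN; apply: eq_bigr => j jy.
by rewrite -(avg_weight_orbit jy) -(avg_weight_orbit kx) avg_weight_skew.
Qed.

Definition stab_weight (i : Q0) : int := #|'C_G[i | 'P]%g|%:R * avg_weight i.

Lemma stab_weight_skew x y :
  stab_weight x * orbit_colsum x y = - (stab_weight y * orbit_colsum y x).
Proof.
have G_neq0 : (#|G|%:R : int) != 0 by rewrite pnatr_eq0 -lt0n cardG_gt0.
apply: (mulfI G_neq0); rewrite /stab_weight.
set cx := #|'C_G[x | 'P]%g|%:R; set cy := #|'C_G[y | 'P]%g|%:R.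
transitivity (cx * cy * (avg_weight x * (#|orbit 'P G y|%:R * orbit_colsum x y))).
  by rewrite -(card_orbit_stab 'P G y) natrM -/cy; ring.
by rewrite orbit_colsum_skew -(card_orbit_stab 'P G x) natrM -/cx; ring.
Qed.

End AveragedSymmetrizer.

Lemma orbit_type_pick (Q0 : finType) (G : {group {perm Q0}}) (I : orbit_type G) :
  exists2 i, [pick j in val I] = Some i & val I = orbit 'P G i.
Proof.
case: I => [O /= /imsetP[x _ ->]].
case: pickP => [i iO|/(_ x)]; last by rewrite orbit_refl.
by exists i => //; apply/esym/orbit_eqP.
Qed.

Theorem mainTheorem7 (Q0 : finType) (A : qmatrix Q0) (G : {group {perm Q0}}) :
  admissible A G -> skew_symmetrizable A ->
  skew_symmetrizable (quotient_matrix A G).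
Proof.
move=> [autA _] [d [d_gt0 dA]].
exists (fun I : orbit_type G => if [pick i in val I] is Some i then stab_weight G d i else 1).
split=> [I | I J].
  have [i -> _] := orbit_type_pick I.
  by rewrite pmulr_rgt0 ?avg_weight_gt0 // ltr0n cardG_gt0.
have [i pI eI] := orbit_type_pick I; have [j pJ eJ] := orbit_type_pick J.
rewrite /quotient_matrix pI pJ eI eJ.
exact: stab_weight_skew.
Qed.
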